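(* Let $\varphi = \varphi(a,n): A \times \mathbb{N}\to \mathbb{N}$ be a predicate of $\mathbf{PR}$ (i.e. $\mathrm{sign}\circ\varphi = \varphi$). If $\mathbf{PR}$ derives $\varphi(a,0) = \mathrm{true}_A(a)$, i.e. $\varphi\circ(\mathrm{id}_A,0\circ\Pi_A) = \mathrm{true}_A$, and derives $[\varphi(a,n) \Rightarrow \varphi(a,\mathrm{s}\,n)] = \mathrm{true}_{A\times\mathbb{N}}$, then $\mathbf{PR}$ derives $\varphi = \mathrm{true}_{A\times\mathbb{N}}$.
   Context: $\mathbf{PR}$ is the formal (syntactic) category defined as follows. Objects: generated from a terminal object $\mathbb{1}$ and a natural numbers object $\mathbb{N}$ by binary products. Maps: generated from $0: \mathbb{1} \to \mathbb{N}$, $\mathrm{s}: \mathbb{N}\to\mathbb{N}$, identities, terminal maps $\Pi_A$, projections $\ell,\mathrm{r}$, by composition, induced maps $(f,g)$ and iteration $f\mapsto f^\S: A\times\mathbb{N}\to A$ of endomaps; map equality is the least congruence containing the category axioms, uniqueness of maps into $\mathbb{1}$, $\ell\circ(f,g)=f$, $\mathrm{r}\circ(f,g)=g$, $(\ell h,\mathrm{r} h)=h$, $f^\S(a,0)=a$, $f^\S(a,\mathrm{s}n)=f(f^\S(a,n))$, and Freyd's uniqueness rule for initialised iterates ($h(a,0)=f(a)$ and $h(a,\mathrm{s}n)=g(h(a,n))$ imply $h=g^\S\circ(f\times\mathbb{N})$). Logic on $\mathbb{N}$: $\mathrm{true}=1=\mathrm{s}0$, $\mathrm{true}_A = 1\circ\Pi_A$;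 $\neg 0=1$, $\neg\mathrm{s}n=0$; $\mathrm{sign}=\neg\neg$; $x\vee y=\mathrm{sign}(x+y)$; $[x\Rightarrow y]=\neg x\vee y$. *)

(* the free (syntactic) category PR, built from terms and
   the least congruence generated by the PR axioms. *)
Set Implicit Arguments.

Inductive Obj : Type :=
| One : Obj
| NatO : Obj
| Prod : Obj -> Obj -> Obj.

Inductive Map : Obj -> Obj -> Type :=
| zero : Map One NatO
| succ : Map NatO NatO
| idm : forall A, Map A A
| bang : forall A, Map A One
| lproj : forall A B, Map (Prod A B) A
| rproj : forall A B, Map (Prod A B) B
| comp : forall A B C, Map B C -> Map A B -> Map A C
| pair : forall C A B, Map C A -> Map C B -> Map C (Prod A B)
| iter : forall A, Map A A -> Map (Prod A NatO) A.

Arguments idm {A}.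
Arguments bang {A}.
Arguments lproj {A B}.
Arguments rproj {A B}.

Definition crossN {A B} (f : Map A B) : Map (Prod A NatO) (Prod B NatO) :=
  pair (comp f lproj) rproj.

Definition idxs {A} : Map (Prod A NatO) (Prod A NatO) :=
  pair lproj (comp succ rproj).

Definition at0 {A} : Map A (Prod A NatO) := pair idm (comp zero bang).

Inductive Eqv : forall A B, Map A B -> Map A B -> Prop :=
| eqv_refl : forall A B (f : Map A B), Eqv f f
| eqv_sym : forall A B (f g : Map A B), Eqv f g -> Eqv g f
| eqv_trans : forall A B (f g h : Map A B), Eqv f g -> Eqv g h -> Eqv f h
| eqv_comp : forall A B C (f f' : Map B C) (g g' : Map A B),
    Eqv f f' -> Eqv g g' -> Eqv (comp f g) (comp f' g')
| eqv_pair : forall C A B (f f' : Map C A) (g g' : Map C B),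
    Eqv f f' -> Eqv g g' -> Eqv (pair f g) (pair f' g')
| eqv_iter : forall A (f f' : Map A A), Eqv f f' -> Eqv (iter f) (iter f')
| eqv_idl : forall A B (f : Map A B), Eqv (comp idm f) f
| eqv_idr : forall A B (f : Map A B), Eqv (comp f idm) f
| eqv_assoc : forall A B C D (f : Map C D) (g : Map B C) (h : Map A B),
    Eqv (comp f (comp g h)) (comp (comp f g) h)
| eqv_terminal : forall A (f : Map A One), Eqv f bang
| eqv_lpair : forall C A B (f : Map C A) (g : Map C B), Eqv (comp lproj (pair f g)) f
| eqv_rpair : forall C A B (f : Map C A) (g : Map C B), Eqv (comp rproj (pair f g)) g
| eqv_pair_eta : forall C A B (h : Map C (Prod A B)),
    Eqv (pair (comp lproj h) (comp rproj h)) h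
| eqv_iter0 : forall A (f : Map A A), Eqv (comp (iter f) at0) idm
| eqv_iterS : forall A (f : Map A A), Eqv (comp (iter f) idxs) (comp f (iter f))
| eqv_freyd : forall A B (f : Map A B) (g : Map B B) (h : Map (Prod A NatO) B),
    Eqv (comp h at0) f -> Eqv (comp h idxs) (comp g h) ->
    Eqv h (comp (iter g) (crossN f)).

Definition oneN : Map One NatO := comp succ zero.
Definition trueM (A : Obj) : Map A NatO := comp oneN (@bang A).
(* neg: neg 0 = 1, neg (s n) = 0; defined as (0 o Pi_N)^S o (1 o Pi_N, id_N) *)
Definition negM : Map NatO NatO :=
  comp (iter (comp zero (@bang NatO))) (pair (comp oneN (@bang NatO)) idm).
Definition signM : Map NatO NatO := comp negM negM.
Definition plusM : Map (Prod NatO NatO) NatO := iter succ.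
Definition orM {C} (x y : Map C NatO) : Map C NatO :=
  comp signM (comp plusM (pair x y)).
Definition impM {C} (x y : Map C NatO) : Map C NatO := orM (comp negM x) y.

(* Put psi := phi o (id_A x s), i.e. psi(a,n) = phi(a,s n).  Both phi
   and true_{A x N} agree at n = 0 and obey one and the same recurrence
       b(a, s n) = G((a,n), b(a,n)),   G(x, b) := not[b => psi x] \/ psi x.
   For b = phi the hypothesis [phi => psi] = true makes G(x, phi x) =
   false \/ psi x = sign (psi x) = psi x; for b = true we get
   G(x, true) = not(sign (psi x)) \/ psi x, which is true by a form of the
   excluded middle proved by induction on N.  Since recursion with access to
   the parameter has unique solutions (a consequence of Freyd's uniqueness
   rule for initialised iterates), phi = true. *)

From Stdlib Require Import Setoid Morphisms.

#[local] Instance Eqv_Equiv A B : Equivalence (@Eqv A B).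
Proof. split; red; intros; eauto using eqv_refl, eqv_sym, eqv_trans. Qed.

#[local] Instance comp_Proper A B C :
  Proper (@Eqv B C ==> @Eqv A B ==> @Eqv A C) (@comp A B C).
Proof. repeat red; intros; apply eqv_comp; auto. Qed.

#[local] Instance pair_Proper C A B :
  Proper (@Eqv C A ==> @Eqv C B ==> @Eqv C (Prod A B)) (@pair C A B).
Proof. repeat red; intros; apply eqv_pair; auto. Qed.

#[local] Instance crossN_Proper A B : Proper (@Eqv A B ==> @Eqv _ _) (@crossN A B).
Proof. repeat red; intros; unfold crossN; rewrite H; reflexivity. Qed.

#[local] Instance orM_Proper C :
  Proper (@Eqv C NatO ==> @Eqv C NatO ==> @Eqv C NatO) (@orM C).
Proof. repeat red; intros; unfold orM; rewrite H, H0; reflexivity. Qed.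

#[local] Instance impM_Proper C :
  Proper (@Eqv C NatO ==> @Eqv C NatO ==> @Eqv C NatO) (@impM C).
Proof. repeat red; intros; unfold impM; rewrite H, H0; reflexivity. Qed.

Lemma assoc A B C D (f : Map C D) (g : Map B C) (h : Map A B) :
  Eqv (comp f (comp g h)) (comp (comp f g) h).
Proof. apply eqv_assoc. Qed.

Lemma pair_comp D C A B (f : Map C A) (g : Map C B) (h : Map D C) :
  Eqv (comp (pair f g) h) (pair (comp f h) (comp g h)).
Proof.
  rewrite <- (eqv_pair_eta (comp (pair f g) h)).
  rewrite !assoc, eqv_lpair, eqv_rpair. reflexivity.
Qed.

Lemma zero_const_comp A B (f : Map A B) :
  Eqv (comp (comp zero bang) f) (comp zero bang).
Proof. rewrite <- assoc, eqv_terminal. reflexivity. Qed.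

Lemma trueM_comp A B (f : Map A B) : Eqv (comp (trueM B) f) (trueM A).
Proof. unfold trueM. rewrite <- assoc, eqv_terminal. reflexivity. Qed.

Lemma zero_const : Eqv zero (comp zero (@bang One)).
Proof. rewrite <- (eqv_terminal (@idm One)), eqv_idr. reflexivity. Qed.

Lemma iter_zero C A (f : Map A A) (u : Map C A) :
  Eqv (comp (iter f) (pair u (comp zero bang))) u.
Proof.
  transitivity (comp (iter f) (comp at0 u)).
  - unfold at0. rewrite pair_comp, eqv_idl, zero_const_comp. reflexivity.
  - rewrite assoc, eqv_iter0, eqv_idl. reflexivity.
Qed.

Lemma iter_succ C A (f : Map A A) (u : Map C A) (n : Map C NatO) :
  Eqv (comp (iter f) (pair u (comp succ n))) (comp f (comp (iter f) (pair u n))).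
Proof.
  transitivity (comp (iter f) (comp idxs (pair u n))).
  - unfold idxs. rewrite pair_comp, eqv_lpair, <- assoc, eqv_rpair. reflexivity.
  - rewrite assoc, eqv_iterS, <- assoc. reflexivity.
Qed.

(* Indeed (id, h) is the initialised iterate of x |-> (x (id x s), G x), so
   Freyd's rule determines it by its value at n = 0. *)
Lemma primrec_unique C B (G : Map (Prod (Prod C NatO) B) B)
  (h k : Map (Prod C NatO) B) :
  Eqv (comp h at0) (comp k at0) ->
  Eqv (comp h idxs) (comp G (pair idm h)) ->
  Eqv (comp k idxs) (comp G (pair idm k)) -> Eqv h k.
Proof.
  intros Hinit Hh Hk.
  set (T := pair (comp idxs lproj) G).
  assert (Hgraph : forall x : Map (Prod C NatO) B,
    Eqv (comp x idxs) (comp G (pair idm x)) ->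
    Eqv (pair idm x) (comp (iter T) (crossN (comp (pair idm x) at0)))).
  { intros x Hx. apply eqv_freyd; [reflexivity|]. unfold T.
    rewrite !pair_comp, Hx, <- assoc, eqv_lpair, eqv_idl, eqv_idr. reflexivity. }
  rewrite <- (eqv_rpair idm h), <- (eqv_rpair idm k).
  rewrite (Hgraph h Hh), (Hgraph k Hk), !pair_comp, Hinit. reflexivity.
Qed.

Lemma natrec_unique B (K : Map B B) (h k : Map NatO B) :
  Eqv (comp h zero) (comp k zero) ->
  Eqv (comp h succ) (comp K h) -> Eqv (comp k succ) (comp K k) -> Eqv h k.
Proof.
  intros Hinit Hh Hk.
  assert (R0 : Eqv (comp (@rproj One NatO) at0) zero).
  { unfold at0. rewrite eqv_rpair, <- zero_const. reflexivity. }
  assert (RS : Eqv (comp (@rproj One NatO) idxs) (comp succ rproj)).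
  { unfold idxs. rewrite eqv_rpair. reflexivity. }
  assert (Hproj : Eqv (comp h (@rproj One NatO)) (comp k rproj)).
  { apply (@primrec_unique One B (comp K rproj)).
    - rewrite <- !assoc, R0. exact Hinit.
    - rewrite <- !assoc, RS, assoc, Hh, <- assoc, eqv_rpair. reflexivity.
    - rewrite <- !assoc, RS, assoc, Hk, <- assoc, eqv_rpair. reflexivity. }
  rewrite <- (eqv_idr h), <- (eqv_idr k).
  rewrite <- (eqv_rpair (@bang NatO) idm), !assoc, Hproj. reflexivity.
Qed.

Lemma trueM_succ C : Eqv (trueM C) (comp succ (comp zero (@bang C))).
Proof. unfold trueM, oneN. rewrite assoc. reflexivity. Qed.

Lemma negM_iter C (m : Map C NatO) :
  Eqv (comp negM m) (comp (iter (comp zero bang)) (pair (trueM C) m)).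
Proof.
  unfold negM. rewrite <- assoc, pair_comp, eqv_idl.
  fold (trueM NatO). rewrite trueM_comp. reflexivity.
Qed.

Lemma neg_zero C : Eqv (comp negM (comp zero (@bang C))) (trueM C).
Proof. rewrite negM_iter, iter_zero. reflexivity. Qed.

Lemma neg_succ C (n : Map C NatO) :
  Eqv (comp negM (comp succ n)) (comp zero (@bang C)).
Proof. rewrite negM_iter, iter_succ, zero_const_comp. reflexivity. Qed.

Lemma neg_true C : Eqv (comp negM (trueM C)) (comp zero (@bang C)).
Proof. rewrite trueM_succ, neg_succ. reflexivity. Qed.

Lemma sign_zero C : Eqv (comp signM (comp zero (@bang C))) (comp zero (@bang C)).
Proof. unfold signM. rewrite <- assoc, neg_zero, neg_true. reflexivity. Qed.

Lemma sign_succ C (n : Map C NatO) : Eqv (comp signM (comp succ n)) (trueM C).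
Proof. unfold signM. rewrite <- assoc, neg_succ, neg_zero. reflexivity. Qed.

Lemma sign_true C : Eqv (comp signM (trueM C)) (trueM C).
Proof. rewrite (trueM_succ C) at 1. rewrite sign_succ. reflexivity. Qed.

Lemma plus_zero_left_generic :
  Eqv (comp plusM (pair (comp zero (@bang NatO)) idm)) idm.
Proof.
  apply (@natrec_unique NatO succ).
  - rewrite <- assoc, pair_comp, zero_const_comp, eqv_idl.
    rewrite zero_const at 2.
    unfold plusM. rewrite iter_zero, <- zero_const. reflexivity.
  - rewrite <- assoc, pair_comp, zero_const_comp, eqv_idl.
    rewrite <- (eqv_idr succ) at 1.
    unfold plusM. rewrite iter_succ. reflexivity.
  - rewrite eqv_idl, eqv_idr. reflexivity.
Qed.

Lemma plus_zero_left C (y : Map C NatO) :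
  Eqv (comp plusM (pair (comp zero (@bang C)) y)) y.
Proof.
  transitivity (comp (comp plusM (pair (comp zero (@bang NatO)) idm)) y).
  - rewrite <- assoc, pair_comp, zero_const_comp, eqv_idl. reflexivity.
  - rewrite plus_zero_left_generic, eqv_idl. reflexivity.
Qed.

Lemma orM_comp D C (x y : Map C NatO) (h : Map D C) :
  Eqv (comp (orM x y) h) (orM (comp x h) (comp y h)).
Proof. unfold orM. rewrite <- !assoc, pair_comp. reflexivity. Qed.

Lemma impM_comp D C (x y : Map C NatO) (h : Map D C) :
  Eqv (comp (impM x y) h) (impM (comp x h) (comp y h)).
Proof. unfold impM. rewrite orM_comp, <- assoc. reflexivity. Qed.

Lemma or_false_left C (y : Map C NatO) :
  Eqv (orM (comp zero bang) y) (comp signM y).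
Proof. unfold orM. rewrite plus_zero_left. reflexivity. Qed.

Lemma imp_true_left C (y : Map C NatO) :
  Eqv (impM (trueM C) y) (comp signM y).
Proof. unfold impM. rewrite neg_true, or_false_left. reflexivity. Qed.

Lemma excluded_middle_generic :
  Eqv (orM (comp negM (comp signM idm)) idm) (trueM NatO).
Proof.
  apply (@natrec_unique NatO (trueM NatO)).
  - rewrite trueM_comp, orM_comp, <- !assoc, eqv_idl, zero_const, sign_zero,
      neg_zero.
    unfold orM, plusM. rewrite iter_zero, sign_true. reflexivity.
  - rewrite trueM_comp, orM_comp, <- !assoc, eqv_idl.
    rewrite <- (eqv_idr succ) at 2.
    unfold orM, plusM. rewrite iter_succ, sign_succ. reflexivity.
  - rewrite !trueM_comp. reflexivity.
Qed.

Lemma excluded_middle C (x : Map C NatO) :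
  Eqv (orM (comp negM (comp signM x)) x) (trueM C).
Proof.
  rewrite <- (trueM_comp _ _ x), <- excluded_middle_generic, orM_comp,
    <- !assoc, eqv_idl. reflexivity.
Qed.

(* The common step of phi and true: G(x, b) = not[b => psi x] \/ psi x. *)
Definition induction_step {C} (psi : Map C NatO) : Map (Prod C NatO) NatO :=
  orM (comp negM (impM rproj (comp psi lproj))) (comp psi lproj).

Lemma induction_step_at C (psi b : Map C NatO) :
  Eqv (comp (induction_step psi) (pair idm b)) (orM (comp negM (impM b psi)) psi).
Proof.
  unfold induction_step.
  rewrite orM_comp, <- assoc, impM_comp, eqv_rpair, <- !assoc, eqv_lpair, eqv_idr.
  reflexivity.
Qed.

Theorem mainTheorem4 (A : Obj) (phi : Map (Prod A NatO) NatO) :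
  Eqv (comp signM phi) phi ->
  Eqv (comp phi at0) (trueM A) ->
  Eqv (impM phi (comp phi idxs)) (trueM (Prod A NatO)) ->
  Eqv phi (trueM (Prod A NatO)).
Proof.
  intros Hpred Hbase Hstep.
  set (psi := comp phi idxs) in *.
  assert (Hpsi : Eqv (comp signM psi) psi).
  { unfold psi. rewrite assoc, Hpred. reflexivity. }
  apply (@primrec_unique A NatO (induction_step psi)).
  - rewrite Hbase, trueM_comp. reflexivity.
  - rewrite induction_step_at, Hstep, neg_true, or_false_left, Hpsi.
    reflexivity.
  - rewrite induction_step_at, imp_true_left, excluded_middle, trueM_comp.
    reflexivity.
Qed.
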